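(* Let $G$ be a group with nontrivial center $Z(G)\neq\{1\}$. Then for every subgroup $A\subseteq\operatorname{Aut}(G)$, the $\mathcal{L}(A)$-group $G$ is not an $\mathcal{L}(A)$-equational domain.
   Context: For a subgroup $A\subseteq\operatorname{Aut}(G)$, $\mathcal{L}(A)=\{\cdot,{}^{-1},1\}\cup\{\phi\mid\phi\in A\}$ is the group language with a unary function symbol for each $\phi\in A$, interpreted as $\phi$. $\mathcal{L}(A)$-equations are $t(X)=1$ with $t$ an $\mathcal{L}(A)$-term (equivalently a product $\phi_1(x_{i_1}^{\varepsilon_1})\cdots\phi_k(x_{i_k}^{\varepsilon_k})$, $\phi_j\in A$, $\varepsilon_j=\pm1$); systems are arbitrary sets of equations and $V_G(S)$ is the solution set. A subset of $G^n$ is $\mathcal{L}(A)$-algebraic if it is $V_G(S)$ for some $\mathcal{L}(A)$-system $S$ in $n$ variables. $G$ is an $\mathcal{L}(A)$-equational domain if for every $n$ the union of any two $\mathcal{L}(A)$-algebraic subsets of $G^n$ is $\mathcal{L}(A)$-algebraic. *)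

From mathcomp Require Import all_boot.
Set Implicit Arguments. Unset Strict Implicit. Unset Printing Implicit Defensive.

Record group := Group {
  gcar :> Type;
  gmul : gcar -> gcar -> gcar;
  ginv : gcar -> gcar;
  gone : gcar;
  gmulA : forall x y z, gmul x (gmul y z) = gmul (gmul x y) z;
  gmul1l : forall x, gmul gone x = x;
  gmul1r : forall x, gmul x gone = x;
  gmulVl : forall x, gmul (ginv x) x = gone;
  gmulVr : forall x, gmul x (ginv x) = gone
}.

Definition nontrivial_center (G : group) : Prop :=
  exists z : G, z <> gone G /\ forall g : G, gmul z g = gmul g z.

Definition is_automorphism (G : group) (f : G -> G) : Prop :=
  (forall x y : G, f (gmul x y) = gmul (f x) (f y)) /\
  (forall x y : G, f x = f y -> x = y) /\
  (forall y : G, exists x : G, f x = y).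

Definition aut_subgroup (G : group) (A : (G -> G) -> Prop) : Prop :=
  (forall f, A f -> is_automorphism f) /\
  A (fun x => x) /\
  (forall f g, A f -> A g -> A (fun x => f (g x))) /\
  (forall f, A f -> exists g, A g /\ (forall x, g (f x) = x) /\ (forall x, f (g x) = x)).

(* Terms in the language {., ^-1, 1} u {phi : phi unary function symbol},
   in the variables x_0, ..., x_{n-1}. *)
Inductive term (G : Type) (n : nat) : Type :=
| TVar : 'I_n -> term G n
| TOne : term G n
| TMul : term G n -> term G n -> term G n
| TInv : term G n -> term G n
| TApp : (G -> G) -> term G n -> term G n.

Fixpoint LA_term (G : Type) (n : nat) (A : (G -> G) -> Prop) (t : term G n) : Prop :=
  match t with
  | TVar _ => True
  | TOne => True
  | TMul t1 t2 => LA_term A t1 /\ LA_term A t2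
  | TInv t1 => LA_term A t1
  | TApp f t1 => A f /\ LA_term A t1
  end.

Fixpoint eval (G : group) (n : nat) (x : 'I_n -> G) (t : term G n) : G :=
  match t with
  | TVar i => x i
  | TOne => gone G
  | TMul t1 t2 => gmul (eval x t1) (eval x t2)
  | TInv t1 => ginv (eval x t1)
  | TApp f t1 => f (eval x t1)
  end.

(* A system is an arbitrary set of equations t = 1, represented by the set of terms t. *)
Definition LA_system (G : Type) (n : nat) (A : (G -> G) -> Prop)
  (S : term G n -> Prop) : Prop := forall t, S t -> LA_term A t.

Definition solutions (G : group) (n : nat) (S : term G n -> Prop) (x : 'I_n -> G) : Prop :=
  forall t, S t -> eval x t = gone G.

Definition LA_algebraic (G : group) (n : nat) (A : (G -> G) -> Prop)
  (P : ('I_n -> G) -> Prop) : Prop :=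
  exists S, LA_system A S /\ forall x, P x <-> solutions S x.

Definition LA_equational_domain (G : group) (A : (G -> G) -> Prop) : Prop :=
  forall (n : nat) (P Q : ('I_n -> G) -> Prop),
    LA_algebraic A P -> LA_algebraic A Q ->
    LA_algebraic A (fun x => P x \/ Q x).
Arguments LA_equational_domain : clear implicits.

From mathcomp Require Import all_boot.

(* On tuples of central elements, evaluating an L(A)-term is a homomorphism:
   each automorphism maps the centre Z(G) to itself, and inside the abelian
   group Z(G) products can be rearranged freely.  So the central solutions of
   any L(A)-system form a subgroup of Z(G)^n.  For a central z <> 1 the union
   of the two algebraic sets {x_0 = 1} and {x_1 = 1} contains (z, 1) and
   (1, z) but not their product (z, z), hence it is not algebraic. *)

Set Implicit Arguments.
Unset Strict Implicit.
Unset Printing Implicit Defensive.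

Section Centre.

Variable G : group.
Local Notation "x * y" := (gmul x y).
Local Notation "x ^-1" := (ginv x).
Local Notation "1" := (gone G).

Definition central (c : G) : Prop := forall g : G, c * g = g * c.

Lemma ginv_unique (u v : G) : u * v = 1 -> u^-1 = v.
Proof. by move=> uv1; rewrite -(gmul1r u^-1) -uv1 gmulA gmulVl gmul1l. Qed.

Lemma ginvM (a b : G) : (a * b)^-1 = b^-1 * a^-1.
Proof. by apply: ginv_unique; rewrite -gmulA (gmulA b) gmulVr gmul1l gmulVr. Qed.

Lemma central1 : central 1.
Proof. by move=> g; rewrite gmul1l gmul1r. Qed.

Lemma centralM (a b : G) : central a -> central b -> central (a * b).
Proof. by move=> ca cb g; rewrite -gmulA cb gmulA ca gmulA. Qed.

Lemma centralV (a : G) : central a -> central a^-1.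
Proof.
move=> ca g.
have -> : a^-1 * g = a^-1 * (g * a) * a^-1 by rewrite -!gmulA gmulVr gmul1r.
by rewrite -ca !gmulA gmulVl gmul1l.
Qed.

Lemma central_aut (f : G -> G) (a : G) :
  is_automorphism f -> central a -> central (f a).
Proof. by move=> [fM [_ f_onto]] ca g; have [h <-] := f_onto g; rewrite -!fM ca. Qed.

Variables (A : (G -> G) -> Prop) (n : nat).
Hypothesis A_aut : forall f, A f -> is_automorphism f.

Definition central_tuple (x : 'I_n -> G) : Prop := forall i, central (x i).

Lemma eval_central (x : 'I_n -> G) (t : term G n) :
  central_tuple x -> LA_term A t -> central (eval x t).
Proof.
move=> cx; elim: t => [i | | t1 IH1 t2 IH2 | t1 IH1 | f t1 IH1] //= tA.
- exact: central1.
- by case: tA => /IH1 c1 /IH2 c2; apply: centralM.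
- exact/centralV/IH1.
- by case: tA => /A_aut f_aut /IH1; apply: central_aut.
Qed.

Lemma eval_mul_central (x y : 'I_n -> G) (t : term G n) :
  central_tuple x -> central_tuple y -> LA_term A t ->
  eval (fun i => x i * y i) t = eval x t * eval y t.
Proof.
move=> cx cy; elim: t => [i | | t1 IH1 t2 IH2 | t1 IH1 | f t1 IH1] //= tA.
- by rewrite gmul1l.
- case: tA => t1A t2A; rewrite IH1 // IH2 // -!gmulA; congr (gmul _ _).
  by rewrite !gmulA (eval_central cy t1A).
- by rewrite IH1 // ginvM [RHS](centralV (eval_central cx tA)).
- by case: tA => /A_aut [fM _] t1A; rewrite IH1 // fM.
Qed.

Lemma solutionsM_central (S : term G n -> Prop) (x y : 'I_n -> G) :
  LA_system A S -> central_tuple x -> central_tuple y ->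
  solutions S x -> solutions S y -> solutions S (fun i => x i * y i).
Proof.
move=> SA cx cy Sx Sy t St.
by rewrite eval_mul_central // ?Sx ?Sy ?gmul1l //; apply: SA.
Qed.

Lemma LA_algebraic_coord_eq1 (i : 'I_n) : LA_algebraic A (fun x => x i = 1).
Proof.
exists (fun t => t = TVar G i); split=> [t -> // | x].
by split=> [xi1 t -> // | /(_ (TVar G i) erefl)].
Qed.

Lemma not_LA_algebraic_coord_eq1U (z : G) (i j : 'I_n) :
  central z -> z <> 1 -> i != j ->
  ~ LA_algebraic A (fun x => x i = 1 \/ x j = 1).
Proof.
move=> cz z_neq1 ij [S [SA defS]].
pose e (k : 'I_n) : 'I_n -> G := fun l => if l == k then z else 1.
have ce k : central_tuple (e k).
  by move=> l; rewrite /e; case: (l == k); [exact: cz | exact: central1].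
have eii : e i i = z by rewrite /e eqxx.
have eji : e j i = 1 by rewrite /e (negPf ij).
have eij : e i j = 1 by rewrite /e eq_sym (negPf ij).
have ejj : e j j = z by rewrite /e eqxx.
have /defS[] : solutions S (fun l => e i l * e j l).
  by apply: solutionsM_central => //; apply/defS; [right | left].
- by rewrite /= eii eji gmul1r; exact: z_neq1.
- by rewrite /= eij ejj gmul1l; exact: z_neq1.
Qed.

End Centre.

Theorem corollary1 (G : group) (hZ : nontrivial_center G)
  (A : (G -> G) -> Prop) (hA : aut_subgroup A) :
  ~ LA_equational_domain G A.
Proof.
move=> eqdom; case: hZ => z [z_neq1 cz].
have ord01 : (ord0 : 'I_2) != @Ordinal 2 1 isT by [].
apply: (not_LA_algebraic_coord_eq1U (proj1 hA) cz z_neq1 ord01).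
exact: eqdom (LA_algebraic_coord_eq1 _ _) (LA_algebraic_coord_eq1 _ _).
Qed.
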